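(* Let $N, P, T$ be positive integers and let $0 < a < 1$, $b > 0$, $\epsilon > 0$. For $t = 1, \dots, T$ let $A(t) \in \mathbb{R}^{N \times N}$ satisfy $\|A(t)\|_2 \le a \cdot e^{t-T}$, let $B \in \mathbb{R}^{N \times P}$ satisfy $\|B\|_2 \le b$, let $x(t) \in \mathbb{R}^{P \times 1}$ be arbitrary inputs, and let $\delta_x(t) \in \mathbb{R}^{P \times 1}$ satisfy $\|\delta_x(t)\|_2 \le \epsilon$; set $\overline{x}(t) = x(t) + \delta_x(t)$. Define the state sequences $h(t), \overline{h}(t) \in \mathbb{R}^{N \times 1}$ by $h(0) = \overline{h}(0) = 0$ and, for $1 \le t \le T$, $$h(t) = A(t)\, h(t-1) + B\, x(t), \qquad \overline{h}(t) = A(t)\, \overline{h}(t-1) + B\, \overline{x}(t).$$ Let $\Delta(t) = \overline{h}(t) - h(t)$. Then for every $1 \le t \le T$, $$\|\Delta(t)\|_2 \le \epsilon b \left( \frac{1}{1 - a e^{t-T}} \right),$$ and consequently $\|\Delta(T)\|_2 \le \dfrac{\epsilon b}{1-a}$.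
   Context: $\|\cdot\|_2$ denotes the Euclidean norm for vectors and the spectral norm (operator 2-norm) for matrices. The sequence $\overline{h}$ models the state of the recurrence when the input at each step carries a quantization error $\delta_x(t)$. *)

From HB Require Import structures.
From mathcomp Require Import all_boot all_order all_algebra.
From mathcomp Require Import all_classical all_reals all_analysis.
Set Implicit Arguments. Unset Strict Implicit. Unset Printing Implicit Defensive.
Import Order.TTheory GRing.Theory Num.Theory.
Local Open Scope ring_scope.
Local Open Scope classical_set_scope.

Definition enorm {R : realType} {m n : nat} (v : 'M[R]_(m, n)) : R :=
  Num.sqrt (\sum_(i < m) \sum_(j < n) v i j ^+ 2).

Definition specnorm {R : realType} {m n : nat} (A : 'M[R]_(m, n)) : R :=
  sup [set enorm (A *m v) | v in [set v : 'cV[R]_n | enorm v <= 1]].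

Fixpoint hstate {R : realType} {N P : nat} (A : nat -> 'M[R]_N)
  (B : 'M[R]_(N, P)) (x : nat -> 'cV[R]_P) (t : nat) : 'cV[R]_N :=
  match t with
  | 0 => 0
  | t'.+1 => A t'.+1 *m hstate A B x t' + B *m x t'.+1
  end.

From HB Require Import structures.
From mathcomp Require Import all_boot all_order all_algebra.
From mathcomp Require Import all_classical all_reals all_analysis.
From mathcomp Require Import ring.
Set Implicit Arguments. Unset Strict Implicit. Unset Printing Implicit Defensive.
Import Order.TTheory GRing.Theory Num.Theory.
Local Open Scope ring_scope.

(* By linearity of the recurrence, Delta is the state driven by the input
   errors dx alone, so ||Delta(t)|| <= c_t ||Delta(t-1)|| + eps b with
   c_t = a e^(t-T).  As c_t is nondecreasing and below 1, the bound
   eps b / (1 - c_t) propagates: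
   c_t eps b / (1 - c_(t-1)) + eps b <= c_t eps b / (1 - c_t) + eps b
   = eps b / (1 - c_t). *)

Section EuclideanNorm.
Variable R : realType.
Local Open Scope classical_set_scope.

Lemma enorm_colE n (v : 'cV[R]_n) : enorm v = Num.sqrt (\sum_i v i 0 ^+ 2).
Proof. by congr Num.sqrt; apply: eq_bigr => i _; rewrite big_ord1. Qed.

Lemma enorm_ge0 n (v : 'cV[R]_n) : 0 <= enorm v.
Proof. exact: sqrtr_ge0. Qed.

Lemma enorm_sqr n (v : 'cV[R]_n) : enorm v ^+ 2 = \sum_i v i 0 ^+ 2.
Proof. by rewrite enorm_colE sqr_sqrtr // sumr_ge0 // => i _; rewrite sqr_ge0. Qed.

Lemma enorm0 n : enorm (0 : 'cV[R]_n) = 0.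
Proof. by rewrite enorm_colE big1 ?sqrtr0 // => i _; rewrite mxE expr0n. Qed.

Lemma enormZ n c (v : 'cV[R]_n) : enorm (c *: v) = `|c| * enorm v.
Proof.
rewrite !enorm_colE -sqrtr_sqr -sqrtrM ?sqr_ge0 // mulr_sumr.
by congr Num.sqrt; apply: eq_bigr => i _; rewrite mxE exprMn.
Qed.

Lemma normr_coord_le_enorm n (v : 'cV[R]_n) i : `|v i 0| <= enorm v.
Proof.
rewrite enorm_colE -sqrtr_sqr ler_sqrt; last by rewrite sumr_ge0 // => j _; rewrite sqr_ge0.
by rewrite (bigD1 i) //= lerDl sumr_ge0 // => j _; rewrite sqr_ge0.
Qed.

Lemma enorm_gt0 n (v : 'cV[R]_n) : (0 < enorm v) = (v != 0).
Proof.
apply/idP/idP => [|v_neq0]; first by apply: contraTneq => ->; rewrite enorm0 ltxx.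
rewrite lt_def enorm_ge0 andbT; apply: contra v_neq0 => /eqP nv0.
apply/eqP/matrixP => i j; rewrite (ord1 j) mxE; apply/normr0_eq0/le_anti.
by rewrite normr_ge0 -nv0 normr_coord_le_enorm.
Qed.

Lemma ler_dot_enorm n (u v : 'cV[R]_n) :
  \sum_i u i 0 * v i 0 <= enorm u * enorm v.
Proof.
have [->|u0] := eqVneq u 0.
  by rewrite enorm0 mul0r big1 // => i _; rewrite mxE mul0r.
have [->|v0] := eqVneq v 0.
  by rewrite enorm0 mulr0 big1 // => i _; rewrite mxE mulr0.
set s := enorm u; set t := enorm v.
have st2_gt0 : 0 < s * t *+ 2 by rewrite pmulrn_lgt0 // mulr_gt0 ?enorm_gt0.
(* AM-GM: 2 s t x y <= t^2 x^2 + s^2 y^2; summing gives 2 (s t)^2. *)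
have am_gm i : s * t *+ 2 * (u i 0 * v i 0) <= t ^+ 2 * u i 0 ^+ 2 + s ^+ 2 * v i 0 ^+ 2.
  rewrite -subr_ge0 (_ : _ - _ = (t * u i 0 - s * v i 0) ^+ 2) ?sqr_ge0 //; ring.
rewrite -(ler_pM2l st2_gt0) mulr_sumr.
apply: le_trans (ler_sum _ (fun i _ => am_gm i)) _.
rewrite big_split /= -!mulr_sumr -!enorm_sqr -/s -/t.
by rewrite (_ : _ + _ = s * t *+ 2 * (s * t)) //; ring.
Qed.

Lemma enormD n (u v : 'cV[R]_n) : enorm (u + v) <= enorm u + enorm v.
Proof.
rewrite -(ler_pXn2r (n := 2)) // ?nnegrE ?addr_ge0 ?enorm_ge0 //.
rewrite sqrrD !enorm_sqr.
have -> : \sum_i (u + v) i 0 ^+ 2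
          = \sum_i u i 0 ^+ 2 + (\sum_i u i 0 * v i 0) *+ 2 + \sum_i v i 0 ^+ 2.
  by rewrite -sumrMnl -!big_split; apply: eq_bigr => i _; rewrite mxE sqrrD.
by rewrite lerD2r lerD2l lerMn2r ler_dot_enorm.
Qed.

Lemma specnorm_has_ubound m n (A : 'M[R]_(m, n)) :
  has_ubound [set enorm (A *m v) | v in [set v : 'cV[R]_n | enorm v <= 1]].
Proof.
exists (Num.sqrt (\sum_i (\sum_j `|A i j|) ^+ 2)) => _ [v /= v_le1 <-].
rewrite enorm_colE ler_sqrt; last by rewrite sumr_ge0 // => i _; rewrite sqr_ge0.
apply: ler_sum => i _; rewrite -real_normK ?num_real // ler_sqr ?nnegrE ?sumr_ge0 //.
rewrite mxE; apply: le_trans (ler_norm_sum _ _ _) _; apply: ler_sum => j _.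
by rewrite normrM ler_piMr // (le_trans _ v_le1) ?normr_coord_le_enorm.
Qed.

Lemma enorm_mulmx_le m n (A : 'M[R]_(m, n)) (v : 'cV[R]_n) :
  enorm (A *m v) <= specnorm A * enorm v.
Proof.
have [->|v0] := eqVneq v 0; first by rewrite mulmx0 !enorm0 mulr0.
have nv_gt0 : 0 < enorm v by rewrite enorm_gt0.
have unit_le : enorm (A *m ((enorm v)^-1 *: v)) <= specnorm A.
  apply: (ub_le_sup (specnorm_has_ubound A)); exists ((enorm v)^-1 *: v) => //=.
  by rewrite enormZ ger0_norm ?invr_ge0 ?enorm_ge0 // mulVf ?gt_eqF.
rewrite -scalemxAr enormZ ger0_norm ?invr_ge0 ?enorm_ge0 // in unit_le.
by rewrite mulrC -ler_pdivrMl.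
Qed.

End EuclideanNorm.

Lemma hstateD (R : realType) N P (A : nat -> 'M[R]_N) (B : 'M[R]_(N, P))
    (x y : nat -> 'cV[R]_P) t :
  hstate A B (fun s => x s + y s) t = hstate A B x t + hstate A B y t.
Proof. by elim: t => [|t IH] /=; rewrite ?addr0 // IH !mulmxDr addrACA. Qed.

Lemma enorm_hstateS_le (R : realType) N P (A : nat -> 'M[R]_N) (B : 'M[R]_(N, P))
    (y : nat -> 'cV[R]_P) t :
  enorm (hstate A B y t.+1)
    <= specnorm (A t.+1) * enorm (hstate A B y t) + specnorm B * enorm (y t.+1).
Proof. exact: le_trans (enormD _ _) (lerD (enorm_mulmx_le _ _) (enorm_mulmx_le _ _)). Qed.

Lemma ler_contraction_recurrence (R : realFieldType) (K : R) (c d : nat -> R) (n : nat) :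
  0 <= K ->
  (forall t, (t <= n)%N -> 0 <= c t < 1) ->
  (forall t, (t < n)%N -> c t <= c t.+1) ->
  d 0%N <= K / (1 - c 0%N) ->
  (forall t, (t < n)%N -> d t.+1 <= c t.+1 * d t + K) ->
  forall t, (t <= n)%N -> d t <= K / (1 - c t).
Proof.
move=> K_ge0 c_range c_mono d0 d_step; elim=> [//|t IH tn].
have /andP[_ ct_lt1] := c_range t (ltnW tn).
have /andP[cS_ge0 cS_lt1] := c_range t.+1 tn.
have bound_mono : K / (1 - c t) <= K / (1 - c t.+1).
  rewrite ler_wpM2l // lef_pV2 ?posrE ?subr_gt0 //.
  by rewrite lerD2l lerN2 c_mono.
apply: le_trans (d_step t tn) _.
apply: le_trans (_ : c t.+1 * (K / (1 - c t.+1)) + K <= _).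
  by rewrite lerD2r ler_wpM2l // (le_trans (IH (ltnW tn))).
rewrite (_ : _ + _ = K / (1 - c t.+1)) //.
by field; rewrite subr_eq0 gt_eqF.
Qed.

Theorem mainTheorem1 (R : realType) (N P T : nat)
  (hN : (0 < N)%N) (hP : (0 < P)%N) (hT : (0 < T)%N)
  (a b eps : R) (ha0 : 0 < a) (ha1 : a < 1) (hb : 0 < b) (heps : 0 < eps)
  (A : nat -> 'M[R]_N) (B : 'M[R]_(N, P)) (x dx : nat -> 'cV[R]_P)
  (hA : forall t : nat, (1 <= t <= T)%N ->
          specnorm (A t) <= a * expR (t%:R - T%:R))
  (hB : specnorm B <= b)
  (hdx : forall t : nat, (1 <= t <= T)%N -> enorm (dx t) <= eps) :
  let xbar := fun t => x t + dx t in
  let Delta := fun t => hstate A B xbar t - hstate A B x t in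
  (forall t : nat, (1 <= t <= T)%N ->
     enorm (Delta t) <= eps * b * (1 / (1 - a * expR (t%:R - T%:R))))
  /\ enorm (Delta T) <= eps * b / (1 - a).
Proof.
move=> xbar Delta.
have a_ge0 := ltW ha0; have b_ge0 := ltW hb; have eps_ge0 := ltW heps.
pose c (t : nat) := a * expR (t%:R - T%:R).
have DeltaE t : Delta t = hstate A B dx t by rewrite /Delta hstateD addrAC subrr add0r.
have c_range t : (t <= T)%N -> 0 <= c t < 1.
  move=> tT; rewrite mulr_ge0 ?expR_ge0 //=; apply: (le_lt_trans _ ha1).
  by rewrite ler_piMr // expR_le1 subr_le0 ler_nat.
have c_mono t : c t <= c t.+1 by rewrite ler_wpM2l // ler_expR lerD2r ler_nat.
have bound : forall t, (t <= T)%N -> enorm (Delta t) <= eps * b / (1 - c t).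
  apply: (ler_contraction_recurrence (c := c)) => [||t _||t tT].
  - exact: mulr_ge0.
  - exact: c_range.
  - exact: c_mono.
  - have /andP[_ c0_lt1] := c_range 0%N isT.
    by rewrite DeltaE enorm0 divr_ge0 ?mulr_ge0 // subr_ge0 ltW.
  - have tT' : (1 <= t.+1 <= T)%N by [].
    rewrite !DeltaE [eps * b]mulrC; apply: le_trans (enorm_hstateS_le _ _ _ _) _.
    apply: lerD; first by rewrite ler_wpM2r ?enorm_ge0 ?hA.
    apply: le_trans (ler_wpM2r (enorm_ge0 _) hB) _.
    by rewrite ler_wpM2l ?hdx.
split=> [t /andP[_ tT]|]; first by rewrite mul1r bound.
by have := bound T (leqnn T); rewrite /c subrr expR0 mulr1.
Qed.
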